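(* Let $N\ge 1$ and let $A_N^*:=\bigcup_{j=1}^N\bigcup_{B\in L_j(\Gamma)}B$ be the union of all lower sets in $\Gamma=\mathbb N_0^s$ of cardinality at most $N$. Then $A_N^*$ is a monomial degree reducing universal interpolation set of order $N$, and it is minimal: every monomial degree reducing universal interpolation set of order $N$ contains $A_N^*$; in particular no proper subset of $A_N^*$ is a monomial degree reducing universal interpolation set of order $N$.
   Context: $\Pi=\mathbb C[x_1,\dots,x_s]$, $\deg$ is total degree with $\deg 0<0$. For $A\subset\Gamma$, $\Pi_A$ is the span of the monomials $x^\alpha$, $\alpha\in A$. A subspace $\mathcal P\subseteq\Pi$ is a degree reducing universal interpolation space of order $N$ if for every finite $X\subset\mathbb C^s$ with $\#X\le N$ and every $q\in\Pi$ there is $p\in\mathcal P$ with $p|_X=q|_X$ and $\deg p\le\deg q$. A set $A\subset\Gamma$ is a monomial degree reducing universal interpolation set of order $N$ if $\Pi_A$ is a degree reducing universal interpolation space of order $N$. For $\alpha,\beta\in\Gamma$, $\alpha\le\beta$ means $\alpha_j\le\beta_j$ for all $j$; $B\subset\Gamma$ is a lower set if $\alpha\in B$ and $\beta\le\alpha$ imply $\beta\in B$; $L_j(\Gamma)$ denotes the set of lower sets of cardinality $j$. *)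

From mathcomp Require Import all_boot all_algebra.
From mathcomp Require Import Rstruct complex.
From mathcomp Require Import mpoly.
From Stdlib Require Import Reals.

Set Implicit Arguments.
Unset Strict Implicit.
Unset Printing Implicit Defensive.

Local Open Scope ring_scope.

Definition CC : numClosedFieldType := (complex R).

(* Γ = N_0^s is the type 'X_{1..s} of multinomials (exponent vectors);
   monomial x^α is 'X_[α]; Π is {mpoly CC[s]}.
   Subsets of Γ are predicates 'X_{1..s} -> Prop. *)

Definition in_Pi_A (s : nat) (A : 'X_{1..s} -> Prop) (p : {mpoly CC[s]}) : Prop :=
  forall m, m \in msupp p -> A m.

(* Degree comparison with the convention deg 0 < 0:
   msize p = deg p + 1 for p <> 0, and msize 0 = 0, so
   deg p <= deg q  <->  msize p <= msize q. *)
Definition deg_le (s : nat) (p q : {mpoly CC[s]}) : Prop := leq (msize p) (msize q).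

(* P is a degree reducing universal interpolation space of order N:
   for every finite X ⊂ C^s with #X <= N (given as a list X 0, ..., X (k-1)
   of k <= N points, repetitions allowed) and every q there is p ∈ P
   with p|_X = q|_X and deg p <= deg q. *)
Definition deg_red_univ_interp_space (s : nat) (P : {mpoly CC[s]} -> Prop)
    (N : nat) : Prop :=
  forall (k : nat) (X : 'I_k -> 'I_s -> CC), leq k N ->
  forall q : {mpoly CC[s]},
    exists p : {mpoly CC[s]},
      [/\ P p, (forall i : 'I_k, p.@[X i] = q.@[X i]) & deg_le p q].

Definition mon_deg_red_univ_interp_set (s : nat) (A : 'X_{1..s} -> Prop)
    (N : nat) : Prop :=
  deg_red_univ_interp_space (in_Pi_A A) N.

(* Finite subsets of Γ are represented by duplicate-free lists. *)
Definition lower_set (s : nat) (B : seq 'X_{1..s}) : Prop :=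
  forall a b : 'X_{1..s}, a \in B -> lem b a -> b \in B.

Definition in_L (s : nat) (j : nat) (B : seq 'X_{1..s}) : Prop :=
  [/\ lower_set B, uniq B & size B = j].

Definition A_star (s : nat) (N : nat) : 'X_{1..s} -> Prop :=
  fun a => exists j, (leq 1 j && leq j N) /\ exists B : seq 'X_{1..s}, in_L j B /\ a \in B.

From mathcomp Require Import all_boot all_order all_algebra.
From mathcomp Require Import Rstruct complex.
From mathcomp Require Import mpoly.
From Stdlib Require Import Classical.
Import GRing.Theory Order.TTheory Num.Theory.
Set Implicit Arguments.
Unset Strict Implicit.
Unset Printing Implicit Defensive.
Local Open Scope ring_scope.

(* Fix the interpolation points and the degree-compatible monomial order of
   mpoly, and call a monomial standard when it does not agree on the points with
   a combination of smaller monomials.  Rewriting non-standard monomials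
   interpolates every q by standard monomials without raising the degree.
   Standard monomials form a lower set whose evaluation vectors are linearly
   independent, so the box below a standard monomial has at most N elements,
   which places it in A_N^*.
   Conversely, if a lies in a lower set of size at most N, interpolate x^a on
   the grid {m <= a}.  The difference x^a - p vanishes on the grid and has
   degree at most |a|; the mixed forward difference of order a at 0 therefore
   kills it, while it sends it to a! times its coefficient of x^a.  So x^a
   occurs in p, and a is in A. *)

Section Box.
Variable s : nat.
Implicit Types a m : 'X_{1..s}.

Definition box a : seq 'X_{1..s} :=
  [seq bmnm b | b <- enum [pred b : 'X_{1..s < (mdeg a).+1} | lem b a]].

Lemma mem_box a m : (m \in box a) = lem m a.
Proof.
apply/mapP/idP => [[b]|le_ma]; first by rewrite mem_enum => ? ->.
have lt_m : (mdeg m < (mdeg a).+1)%N by rewrite ltnS lemc_mdeg ?lem_leo.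
by exists (BMultinom lt_m); rewrite ?mem_enum.
Qed.

Lemma box_uniq a : uniq (box a).
Proof. by rewrite map_inj_uniq ?enum_uniq //; apply: val_inj. Qed.

Lemma box_lower a : lower_set (box a).
Proof. by move=> m m'; rewrite !mem_box => le_ma le_m'm; apply: lepm_trans le_m'm le_ma. Qed.

Lemma A_star_box N a : A_star N a <-> (size (box a) <= N)%N.
Proof.
have a_box : a \in box a by rewrite mem_box lepm_refl.
split=> [[j [/andP[_ le_jN] [B [[lowB _ sizeB] aB]]]]|le_box_N].
  apply: leq_trans le_jN; rewrite -sizeB; apply: uniq_leq_size (box_uniq a) _ => m.
  by rewrite mem_box; apply: lowB.
exists (size (box a)); split; first by rewrite le_box_N andbT; case: (box a) a_box.
by exists (box a); split => //; split => //; [apply: box_lower | apply: box_uniq].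
Qed.

End Box.

Section StandardMonomials.
Variables (R : fieldType) (s k : nat) (X : 'I_k -> 'I_s -> R).
Local Notation mon := 'X_{1..s}.
Local Notation poly := {mpoly R[s]}.
Implicit Types (P Q : mon -> Prop) (a m : mon) (f p q : poly).

Definition agree p q := forall i, p.@[X i] = q.@[X i].
Definition supported P p := forall m, m \in msupp p -> P m.
Definition interpolable P f := exists2 p, supported P p & agree p f.

Lemma supported0 P : supported P 0.
Proof. by move=> m; rewrite msupp0. Qed.

Lemma supportedD P p q : supported P p -> supported P q -> supported P (p + q).
Proof. by move=> hp hq m /msuppD_le; rewrite mem_cat => /orP[/hp|/hq]. Qed.

Lemma supportedZ P c p : supported P p -> supported P (c *: p).
Proof. by move=> hp m /msuppZ_le /hp. Qed.

Lemma supported_sum P (I : Type) (r : seq I) (F : I -> poly) :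
  (forall i, supported P (F i)) -> supported P (\sum_(i <- r) F i).
Proof.
move=> hF; elim: r => [|i r ih]; first by rewrite big_nil; apply: supported0.
by rewrite big_cons; apply: supportedD.
Qed.

Lemma interpolable0 P : interpolable P 0.
Proof. by exists 0 => //; apply: supported0. Qed.

Lemma interpolableD P f g : interpolable P f -> interpolable P g -> interpolable P (f + g).
Proof.
move=> [p hp af] [q hq ag]; exists (p + q); first exact: supportedD.
by move=> i; rewrite !mevalD af ag.
Qed.

Lemma interpolableZ P c f : interpolable P f -> interpolable P (c *: f).
Proof.
move=> [p hp af]; exists (c *: p); first exact: supportedZ.
by move=> i; rewrite !mevalZ af.
Qed.

Lemma interpolableS P Q f : (forall m, P m -> Q m) -> interpolable P f -> interpolable Q f.
Proof. by move=> PQ [p hp af]; exists p => // m /hp /PQ. Qed.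

Lemma interpolable_agree P f g : agree f g -> interpolable P f -> interpolable P g.
Proof. by move=> afg [p hp af]; exists p => // i; rewrite af afg. Qed.

Lemma interpolable_supported P Q f :
  (forall m, Q m -> interpolable P 'X_[m]) -> supported Q f -> interpolable P f.
Proof.
move=> hQ hf; rewrite [X in interpolable _ X]mpolyE.
elim: (msupp f) (hf : forall m, m \in msupp f -> Q m) => {hf} [|m r ih] hf.
  by rewrite big_nil; apply: interpolable0.
rewrite big_cons; apply: interpolableD.
  by apply/interpolableZ/hQ/hf; rewrite inE eqxx.
by apply: ih => m' m'r; apply: hf; rewrite inE m'r orbT.
Qed.

Definition reducible a := interpolable (fun m => (m < a)%O) 'X_[a].
Definition standard a := ~ reducible a.

Lemma interpolable_standard a : interpolable (fun m => standard m /\ (m <= a)%O) 'X_[a].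
Proof.
elim/(@ltmwf s): a => a IH; have [[p hp ap]|Na] := classic (reducible a).
  apply: interpolable_agree ap _; apply: interpolable_supported hp => m lt_ma.
  apply: interpolableS (IH m lt_ma) => m' [Sm' le_m'm]; split => //.
  exact: le_trans le_m'm (ltW lt_ma).
by exists 'X_[a] => // m; rewrite msuppX inE => /eqP ->.
Qed.

Lemma standard_interpolant q :
  exists p, [/\ supported standard p, agree p q & (msize p <= msize q)%N].
Proof.
have [p hp ap] : interpolable (fun m => standard m /\ (mdeg m < msize q)%N) q.
  apply: interpolable_supported (fun m (mq : m \in msupp q) => mq) => m mq.
  apply: interpolableS (interpolable_standard m) => m' [Sm' le_m'm]; split => //.
  exact: leq_ltn_trans (lemc_mdeg le_m'm) (msize_mdeg_lt mq).
exists p; split=> [m /hp[]//|//|].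
by rewrite msizeE; apply/bigmax_leqP_seq => m /hp[].
Qed.

Lemma standard_lower a b : standard a -> lem b a -> standard b.
Proof.
move=> Sa le_ba [p hp ap]; apply: Sa.
exists (p * 'X_[(a - b)%MM]).
  move=> m; rewrite (perm_mem (msuppMX _ _)) => /mapP [m' /hp lt_m'b ->].
  by rewrite -{2}(submK le_ba) ltmc_add2r.
by move=> i; rewrite !mevalM ap -mevalM -mpolyXD addmC submK.
Qed.

Lemma standard_evals_free (l : seq mon) (c : 'I_(size l) -> R) :
  uniq l -> {in l, forall m, standard m} ->
  (forall i, \sum_(j < size l) c j * 'X_[nth 0%MM l j].@[X i] = 0) ->
  forall j, c j = 0.
Proof.
move=> uniq_l Sl c_rel j1; apply/eqP/negPn/negP => cj1.
pose j0 := [arg max_(j > j1 | c j != 0) nth 0%MM l j]%O.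
have [cj0 j0_max] : c j0 != 0 /\ forall j, c j != 0 -> (nth 0%MM l j <= nth 0%MM l j0)%O.
  by rewrite /j0; case: arg_maxP.
apply: (Sl (nth 0%MM l j0)); first by rewrite mem_nth.
exists (- (c j0)^-1 *: \sum_(j < size l | j != j0) c j *: 'X_[nth 0%MM l j]).
  apply: supportedZ; rewrite big_mkcond /=; apply: supported_sum => j.
  have [_|ne_jj0] := eqVneq j j0; first exact: supported0.
  have [->|cj] := eqVneq (c j) 0; first by rewrite scale0r; apply: supported0.
  move=> m; rewrite msuppMCX // inE => /eqP ->.
  by rewrite lt_neqAle j0_max // andbT nth_uniq.
move=> i; rewrite mevalZ raddf_sum /=.
under eq_bigr => j _ do rewrite mevalZ.
move/eqP: (c_rel i); rewrite (bigD1 j0) //= addrC addr_eq0 => /eqP ->.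
by rewrite mulrN mulNr opprK mulrA mulVf // mul1r.
Qed.

Lemma standard_size_le (l : seq mon) :
  uniq l -> {in l, forall m, standard m} -> (size l <= k)%N.
Proof.
move=> uniq_l Sl.
pose M : 'M[R]_(size l, k) := \matrix_(j, i) 'X_[nth 0%MM l j].@[X i].
suff <- : \rank M = size l by apply: rank_leq_col.
apply/eqP; rewrite eqn_leq rank_leq_row leqNgt; apply/negP => lt_rank.
have /rowV0Pn [v /sub_kermxP vM] : kermx M != 0.
  by rewrite -mxrank_eq0 mxrank_ker subn_eq0 -ltnNge.
apply/negP; rewrite negbK; apply/eqP/rowP => j; rewrite mxE.
apply: standard_evals_free uniq_l Sl _ j => i.
have := congr1 (fun A : 'M[R]_(1, k) => A 0 i) vM; rewrite !mxE; apply: etrans.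
by apply: eq_bigr => j' _; rewrite mxE.
Qed.

Lemma standard_box_size a : standard a -> (size (box a) <= k)%N.
Proof.
move=> Sa; apply: standard_size_le (box_uniq a) _ => m.
by rewrite mem_box; apply: standard_lower.
Qed.

End StandardMonomials.

Section FiniteDifference.
Variable R : nzRingType.

(* [\sum_j fdiff_weight n j * g j] is the n-th forward difference of g at 0. *)
Fixpoint fdiff_weight (n j : nat) : R :=
  match n with
  | 0 => (j == 0)%:R
  | n'.+1 => (if j is j'.+1 then fdiff_weight n' j' else 0) - fdiff_weight n' j
  end.

Lemma fdiff_weight_gt n j : (n < j)%N -> fdiff_weight n j = 0.
Proof.
elim: n j => [|n ih] [|j] //= lt_nj.
by rewrite ih // ih ?subrr //; apply: ltnW.
Qed.

Lemma sum_fdiff_weightS d n (g : nat -> R) : (n.+1 < d)%N ->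
  \sum_(j < d) fdiff_weight n.+1 j * g j =
  \sum_(j < d) fdiff_weight n j * (g j.+1 - g j).
Proof.
case: d => [//|d] lt_nd.
under eq_bigr => j _ do rewrite /= mulrBl.
under [RHS]eq_bigr => j _ do rewrite mulrBr.
rewrite !sumrB big_ord_recl /= mul0r add0r; congr (_ - _).
by rewrite [RHS]big_ord_recr /= (@fdiff_weight_gt n d) ?mul0r ?addr0.
Qed.

Lemma sum_fdiff_weight_exp d n e : (n < d)%N -> (e <= n)%N ->
  \sum_(j < d) fdiff_weight n j * j%:R ^+ e = if e == n then n`!%:R else 0.
Proof.
elim: n e => [|n ih] e lt_nd le_en.
  move: le_en; rewrite leqn0 => /eqP ->; case: d lt_nd => // d _.
  by rewrite big_ord_recl /= big1 ?addr0 ?mulr1 // => j _; rewrite mulr1.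
rewrite (@sum_fdiff_weightS d n (fun j => j%:R ^+ e)) //.
have diff_exp (j : nat) :
    j.+1%:R ^+ e - j%:R ^+ e = \sum_(i < e) j%:R ^+ i *+ 'C(e, i) :> R.
  by rewrite -addn1 natrD exprD1n big_ord_recr /= binn mulr1n addrK.
under eq_bigr => j _ do rewrite diff_exp mulr_sumr.
rewrite exchange_big /=.
have sum_term (i : 'I_e) :
    \sum_(j < d) fdiff_weight n j * (j%:R ^+ i *+ 'C(e, i)) =
    (if i == n :> nat then n`!%:R else 0) *+ 'C(e, i).
  have le_in : (i <= n)%N by rewrite -ltnS; apply: leq_trans (ltn_ord i) le_en.
  rewrite -(ih i (ltnW lt_nd) le_in) -sumrMnl.
  by apply: eq_bigr => j _; rewrite mulrnAr.
under eq_bigr => i _ do rewrite sum_term.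
move: le_en; rewrite leq_eqVlt => /orP[/eqP ->|lt_en].
  rewrite big_ord_recr /= eqxx big1 ?add0r.
    by rewrite binSn factS natrM mulr_natl eqxx.
  by move=> i _; rewrite /= ltn_eqF ?mul0rn.
rewrite (ltn_eqF lt_en) big1 // => i _.
by rewrite ltn_eqF ?mul0rn //; apply: leq_trans (ltn_ord i) _.
Qed.
End FiniteDifference.

Definition mnm_point (R : nzSemiRingType) (s : nat) (m : 'X_{1..s}) : 'I_s -> R :=
  fun c => (m c)%:R.

Lemma mnm_le_mdeg s (m : 'X_{1..s}) c : (m c <= mdeg m)%N.
Proof. by rewrite mdegE (bigD1 c) //= leq_addr. Qed.

Section BoxDifference.
Variables (R : comNzRingType) (s : nat) (a : 'X_{1..s}).
Local Notation d := (mdeg a).+1.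
Local Notation grid := {ffun 'I_s -> 'I_d}.
Local Notation fdiff_exp c e := (\sum_(t < d) fdiff_weight R (a c) t * t%:R ^+ e).

Definition grid_mnm (g : grid) : 'X_{1..s} := [multinom (g c : nat) | c < s].

Definition box_fdiff (f : {mpoly R[s]}) : R :=
  \sum_(g : grid) (\prod_(c < s) fdiff_weight R (a c) (g c)) * f.@[mnm_point R (grid_mnm g)].

Lemma box_fdiffE f :
  box_fdiff f = \sum_(m <- msupp f) f@_m * \prod_(c < s) fdiff_exp c (m c).
Proof.
rewrite /box_fdiff; under eq_bigr => g _ do rewrite mevalE mulr_sumr.
rewrite exchange_big /=; apply: eq_bigr => m _.
rewrite bigA_distr_bigA /= mulr_sumr; apply: eq_bigr => g _.
rewrite mulrCA -big_split /=; congr (_ * _); apply: eq_bigr => c _.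
by rewrite /mnm_point mnmE.
Qed.

Lemma box_fdiff_vanish f :
  {in box a, forall m, f.@[mnm_point R m] = 0} -> box_fdiff f = 0.
Proof.
move=> f0; apply: big1 => g _; have [le_ga|] := boolP [forall c, (g c <= a c)%N].
  rewrite f0 ?mulr0 // mem_box; apply/mnm_lepP => c.
  by rewrite mnmE; apply: (forallP le_ga).
rewrite negb_forall => /existsP[c]; rewrite -ltnNge => lt_ag.
by rewrite (bigD1 c) //= fdiff_weight_gt ?mul0r.
Qed.

Lemma prod_fdiff_exp m : (mdeg m <= mdeg a)%N ->
  \prod_(c < s) fdiff_exp c (m c) = if m == a then (\prod_(c < s) (a c)`!)%:R else 0.
Proof.
move=> le_ma; case: eqP => [->|ne_ma].
  rewrite natr_prod; apply: eq_bigr => c _.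
  by rewrite sum_fdiff_weight_exp ?eqxx ?ltnS ?mnm_le_mdeg.
have [c lt_ma] : exists c, (m c < a c)%N.
  apply/existsP; apply: contra_notT ne_ma; rewrite negb_exists => /forallP ge_ma.
  have le_am : lem a m by apply/mnm_lepP => c; rewrite leqNgt ge_ma.
  move: le_ma; rewrite -(submK le_am) mdegD -{2}[mdeg a]add0n leq_add2r leqn0 mdeg_eq0.
  by move/eqP ->; rewrite add0m.
rewrite (bigD1 c) //= sum_fdiff_weight_exp ?(ltn_eqF lt_ma) ?mul0r ?(ltnW lt_ma) //.
by rewrite ltnS mnm_le_mdeg.
Qed.

Lemma box_fdiff_small f : (msize f <= d)%N ->
  box_fdiff f = f@_a * (\prod_(c < s) (a c)`!)%:R.
Proof.
move=> le_fd; rewrite box_fdiffE [f in RHS]mpolyE raddf_sum mulr_suml /=.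
apply: eq_big_seq => m mf; rewrite mcoeffZ mcoeffX prod_fdiff_exp; last first.
  by rewrite -ltnS; apply: leq_trans (msize_mdeg_lt mf) le_fd.
by case: eqP => _; rewrite ?mulr1 ?mulr0 ?mul0r.
Qed.

End BoxDifference.

Lemma box_vanish_mcoeff_eq0 (R : numDomainType) s (a : 'X_{1..s}) (f : {mpoly R[s]}) :
  (msize f <= (mdeg a).+1)%N -> {in box a, forall m, f.@[mnm_point R m] = 0} -> f@_a = 0.
Proof.
move=> le_fd f0; have := box_fdiff_small le_fd; rewrite box_fdiff_vanish //.
move/esym/eqP; rewrite mulf_eq0 pnatr_eq0 => /orP[/eqP//|].
by rewrite eqn0Ngt prodn_gt0 // => c; rewrite fact_gt0.
Qed.

Lemma A_star_interp_set s N : mon_deg_red_univ_interp_set (@A_star s N) N.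
Proof.
move=> k X le_kN q; have [p [Sp ap le_pq]] := standard_interpolant X q.
exists p; split=> // m /Sp /standard_box_size le_box_k.
by apply/A_star_box; apply: leq_trans le_box_k le_kN.
Qed.

Lemma interp_set_A_star s N (A : 'X_{1..s} -> Prop) :
  mon_deg_red_univ_interp_set A N -> forall a, A_star N a -> A a.
Proof.
move=> HA a /A_star_box le_box_N.
pose X (i : 'I_(size (box a))) := mnm_point CC (nth 0%MM (box a) i).
have [p [pA pX le_pa]] := HA _ X le_box_N 'X_[a].
apply: NNPP => Na; have pa0 : p@_a = 0 by apply/memN_msupp_eq0/negP => /pA.
suff : ('X_[a] - p)@_a = 0.
  by rewrite mcoeffB mcoeffX eqxx pa0 subr0 => /eqP; rewrite oner_eq0.
apply: box_vanish_mcoeff_eq0.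
  by rewrite (leq_trans (msizeD_le _ _)) // msizeN geq_max msizeX leqnn -(msizeX CC).
move=> m /(nthP 0%MM) [i lt_i <-].
by rewrite mevalB -(pX (Ordinal lt_i)) subrr.
Qed.

Theorem corollary20 (s N : nat) (HN : leq 1 N) :
  [/\ mon_deg_red_univ_interp_set (@A_star s N) N,
      (forall A : 'X_{1..s} -> Prop, mon_deg_red_univ_interp_set A N ->
         forall a, @A_star s N a -> A a)
    & (forall A : 'X_{1..s} -> Prop,
         (forall a, A a -> @A_star s N a) ->
         (exists a, @A_star s N a /\ ~ A a) ->
         ~ mon_deg_red_univ_interp_set A N)].
Proof.
split; first exact: A_star_interp_set.
  exact: interp_set_A_star.
by move=> A _ [a [star_a Na]] HA; apply/Na/(interp_set_A_star HA).
Qed.
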